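(* Let $n\ge2$, let $\lambda_1,\dots,\lambda_n\in\mathbb{C}^*$ (not necessarily distinct), and let $1\le s\le n$ be such that $\lambda=(\lambda_1,\dots,\lambda_n)$ has only level $s$ resonances. Suppose there exists a strictly increasing sequence of integers $(p_\nu)_{\nu\ge0}$ with $p_0=1$ such that $\sum_{\nu\ge0}p_\nu^{-1}\log\omega_s(p_{\nu+1})^{-1}<\infty$ (i.e. $\lambda$ satisfies the partial Brjuno condition of order $s$), and that there exist $k\in\mathbb{N}$ and $\alpha\ge1$ such that $p_\nu>k$ implies $\tilde\omega(p_\nu-k)\ge\omega_s(p_\nu)^\alpha$. Then $\lambda$ satisfies the reduced Brjuno condition.
   Context: For $k\in\mathbb{N}^n$, $|k|=k_1+\cdots+k_n$ and $\lambda^k=\lambda_1^{k_1}\cdots\lambda_n^{k_n}$. For $m\ge2$: $\omega_s(m)=\min_{2\le|k|\le m}\min_{1\le j\le n}|\underline\lambda^k-\lambda_j|$, where $k$ ranges over $\mathbb{N}^s$ and $\underline\lambda^k=\lambda_1^{k_1}\cdots\lambda_s^{k_s}$; and $\tilde\omega(m)=\min_{1\le j\le n}\min\{|\lambda^k-\lambda_j| : k\in\mathbb{N}^n,\ 2\le|k|\le m,\ \lambda^k\ne\lambda_j\}$. The reduced Brjuno condition: there is a strictly increasing sequence of integers $(q_\nu)_{\nu\ge0}$ with $q_0=1$ and $\sum_{\nu\ge0}q_\nu^{-1}\log\tilde\omega(q_{\nu+1})^{-1}<\infty$. Only level $s$ resonances: writing $\lambda=(\lambda_1,\dots,\lambda_s,\mu_1,\dots,\mu_r)$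 with $r=n-s$, for every $k\in\mathbb{N}^n$ with $|k|\ge 2$: there is $h\in\{1,\dots,s\}$ with $\lambda^k=\lambda_h$ iff $k\in\tilde K_1$, and there is $j\in\{1,\dots,r\}$ with $\lambda^k=\mu_j$ iff $k\in\tilde K_2$, where $\tilde K_1=\{k: |k|\ge2,\ k_1+\cdots+k_s=1,\ \mu_1^{k_{s+1}}\cdots\mu_r^{k_n}=1\}$ and $\tilde K_2=\{k: |k|\ge 2,\ k_1=\cdots=k_s=0,\ \exists j\text{ with }\mu_1^{k_{s+1}}\cdots\mu_r^{k_n}=\mu_j\}$. *)

From Stdlib Require Import Reals.
From Coquelicot Require Import Coquelicot.
Open Scope R_scope.

(* A tuple lambda = (lambda_1,...,lambda_n) of complex numbers is encoded as
   lam : nat -> C with lambda_{i+1} = lam i (only i < n matters).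
   A multi-index k in N^n is encoded as k : nat -> nat with k_{i+1} = k i. *)

Fixpoint cpow (z : C) (e : nat) : C :=
  match e with O => RtoC 1 | S e' => Cmult z (cpow z e') end.

Fixpoint cmonom (lam : nat -> C) (k : nat -> nat) (a len : nat) : C :=
  match len with
  | O => RtoC 1
  | S l => Cmult (cpow (lam a) (k a)) (cmonom lam k (S a) l)
  end.

Fixpoint ksum (k : nat -> nat) (a len : nat) : nat :=
  match len with O => O | S l => (k a + ksum k (S a) l)%nat end.

Definition omega_s (lam : nat -> C) (n s m : nat) : Rbar :=
  Glb_Rbar (fun x => exists k : nat -> nat, exists j : nat,
     (2 <= ksum k 0 s <= m)%nat /\ (j < n)%nat /\
     x = Cmod (Cminus (cmonom lam k 0 s) (lam j))).

(* tilde omega(m) = min_j min { |lambda^k - lambda_j| : k in N^n, 2<=|k|<=m,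
   lambda^k <> lambda_j } (infimum in Rbar; +oo for an empty set). *)
Definition omega_t (lam : nat -> C) (n m : nat) : Rbar :=
  Glb_Rbar (fun x => exists k : nat -> nat, exists j : nat,
     (2 <= ksum k 0 n <= m)%nat /\ (j < n)%nat /\
     cmonom lam k 0 n <> lam j /\
     x = Cmod (Cminus (cmonom lam k 0 n) (lam j))).

Definition brjuno_along (w : nat -> Rbar) (p : nat -> nat) : Prop :=
  p 0%nat = 1%nat /\ (forall nu, (p nu < p (S nu))%nat) /\
  (forall nu, Rbar_lt (Finite 0) (w (p (S nu))) /\ is_finite (w (p (S nu)))) /\
  ex_series (fun nu => / INR (p nu) * ln (/ real (w (p (S nu))))).

(* Only level s resonances, with r = n - s, mu_j = lambda_{s+j}. *)
Definition only_level_s_resonances (lam : nat -> C) (n s : nat) : Prop :=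
  forall k : nat -> nat, (2 <= ksum k 0 n)%nat ->
    ((exists h, (h < s)%nat /\ cmonom lam k 0 n = lam h) <->
       (ksum k 0 s = 1%nat /\ cmonom lam k s (n - s) = RtoC 1)) /\
    ((exists j, (j < n - s)%nat /\ cmonom lam k 0 n = lam (s + j)%nat) <->
       ((forall i, (i < s)%nat -> k i = 0%nat) /\
        exists j, (j < n - s)%nat /\ cmonom lam k s (n - s) = lam (s + j)%nat)).

Definition partial_brjuno (lam : nat -> C) (n s : nat) : Prop :=
  exists p : nat -> nat, brjuno_along (omega_s lam n s) p.

Definition reduced_brjuno (lam : nat -> C) (n : nat) : Prop :=
  exists q : nat -> nat, brjuno_along (omega_t lam n) q.

From Stdlib Require Import Reals Lia Lra Classical.
From Coquelicot Require Import Coquelicot.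
Open Scope R_scope.

(* The function m |-> omega_t(m) is nonincreasing.  If it never drops below 1,
   it is also bounded above by |lambda_1^2 - lambda_1| (which is nonzero, since
   lambda_1^2 = lambda_1 would be a resonance that is not of level s), so the
   terms of the reduced Brjuno series along q_nu = 2^nu are O(2^-nu).
   Otherwise omega_t(m) < 1 for m >= m0, and along q_nu = p_(nu+N) - k with
   N >= m0 + 2k the hypothesis gives
     0 <= log omega_t(q_(nu+1))^-1 <= alpha log omega_s(p_(nu+N+1))^-1,
   while q_nu >= p_(nu+N)/2; the reduced Brjuno series is then dominated by
   2 alpha times a tail of the partial Brjuno series. *)

Lemma ex_series_Rabs_le (a b : nat -> R) (c : R) :
  (forall nu, Rabs (a nu) <= c * b nu) -> ex_series b -> ex_series a.
Proof.
  intros Hab Hb.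
  apply (ex_series_le a (fun nu => scal c (b nu))); [exact Hab|].
  exact (ex_series_scal c b Hb).
Qed.

Lemma Rbar_between_finite (c C : R) (y : Rbar) :
  Rbar_le (Finite c) y -> Rbar_le y (Finite C) -> exists x, y = Finite x /\ c <= x <= C.
Proof. destruct y as [x| |]; simpl; intros H1 H2; try contradiction; now exists x. Qed.

Lemma brjuno_along_S_le (w : nat -> Rbar) (p : nat -> nat) :
  brjuno_along w p -> forall nu, (S nu <= p nu)%nat.
Proof.
  intros (Hp0 & Hpinc & _) nu; induction nu as [|nu IH]; [lia|].
  specialize (Hpinc nu); lia.
Qed.

Lemma ksum_zero (k : nat -> nat) (len a : nat) :
  (forall i, (a <= i)%nat -> k i = 0%nat) -> ksum k a len = 0%nat.
Proof.
  revert a; induction len as [|len IH]; intros a Hk; simpl; [reflexivity|].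
  rewrite Hk by lia. rewrite IH by (intros; apply Hk; lia). reflexivity.
Qed.

Definition twice_first (i : nat) : nat := if Nat.eqb i 0 then 2%nat else 0%nat.

Lemma ksum_twice_first (m : nat) : (1 <= m)%nat -> ksum twice_first 0 m = 2%nat.
Proof.
  destruct m as [|m]; intros Hm; [lia|]. simpl.
  rewrite ksum_zero; [reflexivity|].
  intros i Hi; unfold twice_first; destruct (Nat.eqb_spec i 0); lia.
Qed.

Lemma twice_first_nonresonant (lam : nat -> C) (n s : nat) :
  (1 <= s <= n)%nat -> only_level_s_resonances lam n s ->
  cmonom lam twice_first 0 n <> lam 0%nat.
Proof.
  intros Hs Hres E.
  destruct (Hres twice_first) as [[Hlevel _] _]; [rewrite ksum_twice_first; lia|].
  destruct Hlevel as [Hsum _]; [exists 0%nat; split; [lia|exact E]|].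
  rewrite ksum_twice_first in Hsum; lia.
Qed.

Lemma omega_t_le (lam : nat -> C) (n m j : nat) (k : nat -> nat) :
  (2 <= ksum k 0 n <= m)%nat -> (j < n)%nat -> cmonom lam k 0 n <> lam j ->
  Rbar_le (omega_t lam n m) (Finite (Cmod (Cminus (cmonom lam k 0 n) (lam j)))).
Proof. intros Hk Hj Hne; apply (proj1 (Glb_Rbar_correct _)); now exists k, j. Qed.

Lemma omega_t_antitone (lam : nat -> C) (n m m' : nat) :
  (m <= m')%nat -> Rbar_le (omega_t lam n m') (omega_t lam n m).
Proof.
  intros Hm; apply (proj2 (Glb_Rbar_correct _)).
  intros x (k & j & Hk & Hj & Hne & ->); apply omega_t_le; auto; lia.
Qed.

Lemma omega_t_bounded (lam : nat -> C) (n s m : nat) :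
  (1 <= s <= n)%nat -> only_level_s_resonances lam n s -> (2 <= m)%nat ->
  Rbar_le (omega_t lam n m)
          (Finite (Cmod (Cminus (cmonom lam twice_first 0 n) (lam 0%nat)))).
Proof.
  intros Hs Hres Hm; apply omega_t_le.
  - rewrite ksum_twice_first; lia.
  - lia.
  - exact (twice_first_nonresonant lam n s Hs Hres).
Qed.

Lemma brjuno_along_pow2 (w : nat -> Rbar) (c C : R) : 0 < c ->
  (forall m, (2 <= m)%nat -> Rbar_le (Finite c) (w m) /\ Rbar_le (w m) (Finite C)) ->
  brjuno_along w (fun nu => 2 ^ nu)%nat.
Proof.
  intros Hc Hw.
  assert (Hpow2 : forall nu, (2 <= 2 ^ S nu)%nat).
  { intros nu; simpl; pose proof (Nat.pow_nonzero 2 nu); lia. }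
  assert (Hval : forall nu, exists x, w (2 ^ S nu)%nat = Finite x /\ c <= x <= C).
  { intros nu; destruct (Hw _ (Hpow2 nu)); now apply Rbar_between_finite. }
  split; [reflexivity|]; split; [|split].
  - intros nu; simpl; pose proof (Nat.pow_nonzero 2 nu); lia.
  - intros nu; destruct (Hval nu) as (x & -> & Hx); simpl; split; [lra|reflexivity].
  - apply (ex_series_Rabs_le _ (fun nu => (/ 2) ^ nu) (Rmax (Rabs (ln c)) (Rabs (ln C)))).
    + intros nu; destruct (Hval nu) as (x & -> & Hx); simpl real.
      assert (Hln : Rabs (ln x) <= Rmax (Rabs (ln c)) (Rabs (ln C)))
        by (apply RmaxAbs; apply ln_le; lra).
      rewrite pow_INR, Rabs_mult, ln_Rinv, Rabs_Ropp by lra.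
      replace (INR 2) with 2 by (simpl; ring).
      rewrite pow_inv, Rabs_inv, Rabs_pos_eq, Rmult_comm by (apply pow_le; lra).
      apply Rmult_le_compat_r; [apply Rlt_le, Rinv_0_lt_compat, pow_lt; lra|exact Hln].
    + apply ex_series_geom; rewrite Rabs_pos_eq; lra.
Qed.

Lemma ln_inv_le_of_Rpower_le (o x alpha : R) :
  0 < o -> Rpower o alpha <= x -> x < 1 -> 0 <= ln (/ x) <= alpha * ln (/ o).
Proof.
  intros Ho Hox Hx1.
  assert (Hpos : 0 < Rpower o alpha) by apply exp_pos.
  assert (Hlnx : alpha * ln o <= ln x) by (rewrite <- ln_Rpower; apply ln_le; lra).
  assert (Hneg : ln x < 0) by (rewrite <- ln_1; apply ln_increasing; lra).
  rewrite !ln_Rinv by lra; lra.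
Qed.

Lemma inv_sub_le_twice_inv (P K : R) : 0 < P -> 2 * K <= P -> / (P - K) <= 2 * / P.
Proof.
  intros HP HK.
  apply (Rmult_le_reg_l (P * (P - K))); [apply Rmult_lt_0_compat; lra|].
  replace (P * (P - K) * / (P - K)) with P by (field; lra).
  replace (P * (P - K) * (2 * / P)) with (2 * (P - K)) by (field; lra).
  lra.
Qed.

Section BrjunoTransfer.

Variables (v w : nat -> Rbar) (p : nat -> nat) (k m0 : nat) (alpha : R).
Hypothesis brjuno_v : brjuno_along v p.
Hypothesis w_antitone : forall m m', (m <= m')%nat -> Rbar_le (w m') (w m).
Hypothesis w_m0_lt_1 : Rbar_lt (w m0) (Finite 1).
Hypothesis v_controls_w : forall nu, (k < p nu)%nat ->
  Rbar_le (Finite (Rpower (real (v (p nu))) alpha)) (w (p nu - k)%nat).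

Let N := (m0 + 2 * k)%nat.

Definition shifted_seq (nu : nat) : nat :=
  match nu with O => 1%nat | S mu => (p (S mu + N) - k)%nat end.

Let p_ge := brjuno_along_S_le v p brjuno_v.

Lemma shifted_seq_increasing (nu : nat) : (shifted_seq nu < shifted_seq (S nu))%nat.
Proof.
  pose proof brjuno_v as (_ & Hpinc & _).
  destruct nu as [|nu]; simpl.
  - pose proof (p_ge (S N)); unfold N in *; lia.
  - pose proof (Hpinc (S (nu + N))); pose proof (p_ge (S (nu + N))); unfold N in *; lia.
Qed.

Lemma shifted_seq_values (nu : nat) : exists x o,
  w (shifted_seq (S nu)) = Finite x /\ v (p (S nu + N)%nat) = Finite o /\
  0 < o /\ Rpower o alpha <= x /\ x < 1.
Proof.
  pose proof brjuno_v as (_ & _ & Hv & _).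
  destruct (Hv (nu + N)%nat) as [Hpos Hfin]; simpl plus.
  destruct (v (p (S (nu + N)))) as [o| |] eqn:Eo; simpl in Hpos, Hfin;
    try discriminate; try contradiction.
  pose proof (p_ge (S (nu + N))).
  pose proof (v_controls_w (S (nu + N)) ltac:(unfold N in *; lia)) as Hlow.
  pose proof (w_antitone m0 (p (S (nu + N)) - k) ltac:(unfold N in *; lia)) as Hup.
  rewrite Eo in Hlow; simpl in Hlow |- *.
  destruct (w (p (S (nu + N)) - k)%nat) as [x| |], (w m0);
    simpl in Hlow, Hup, w_m0_lt_1; try contradiction.
  exists x, o; repeat split; auto; lra.
Qed.

Lemma brjuno_along_shifted_seq : brjuno_along w shifted_seq.
Proof.
  split; [reflexivity|]; split; [exact shifted_seq_increasing|split].
  { intros nu; destruct (shifted_seq_values nu) as (x & o & -> & _ & _ & Hx & _).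
    pose proof (exp_pos (alpha * ln o)); simpl; split; [unfold Rpower in Hx; lra|reflexivity]. }
  pose proof brjuno_v as (_ & _ & _ & Hser).
  apply ex_series_incr_1, (ex_series_Rabs_le _
    (fun nu => / INR (p (S N + nu)%nat) * ln (/ real (v (p (S (S N + nu)%nat)))))
    (2 * alpha)).
  2: exact (proj1 (ex_series_incr_n _ (S N)) Hser).
  intros nu.
  destruct (shifted_seq_values (S nu)) as (x & o & Ex & Eo & Ho & Hox & Hx1).
  replace (S (S N + nu)) with (S (S nu) + N)%nat by lia.
  replace (S N + nu)%nat with (S nu + N)%nat by lia.
  change (shifted_seq (S nu)) with (p (S nu + N) - k)%nat; rewrite Ex, Eo; simpl real.
  pose proof (p_ge (S nu + N)).
  rewrite minus_INR by (unfold N in *; lia).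
  assert (HP : 1 <= INR (p (S nu + N))) by (apply (le_INR 1); lia).
  assert (HK : 2 * INR k <= INR (p (S nu + N)))
    by (rewrite <- (mult_INR 2); apply le_INR; unfold N in *; lia).
  pose proof (inv_sub_le_twice_inv (INR (p (S nu + N))) (INR k) ltac:(lra) HK) as Hinv.
  pose proof (ln_inv_le_of_Rpower_le _ _ _ Ho Hox Hx1) as Hln.
  set (P := INR (p (S nu + N))) in *.
  rewrite Rabs_pos_eq
    by (apply Rmult_le_pos; [apply Rlt_le, Rinv_0_lt_compat|]; lra).
  replace (2 * alpha * (/ P * ln (/ o))) with ((2 * / P) * (alpha * ln (/ o))) by ring.
  apply Rmult_le_compat; try lra.
  apply Rlt_le, Rinv_0_lt_compat; lra.
Qed.

End BrjunoTransfer.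

Theorem lemma2p2 (n s : nat) (lam : nat -> C) :
  (2 <= n)%nat ->
  (forall i, (i < n)%nat -> lam i <> RtoC 0) ->
  (1 <= s <= n)%nat ->
  only_level_s_resonances lam n s ->
  (exists p : nat -> nat,
     brjuno_along (omega_s lam n s) p /\
     exists (k : nat) (alpha : R), 1 <= alpha /\
       forall nu, (k < p nu)%nat ->
         Rbar_le (Finite (Rpower (real (omega_s lam n s (p nu))) alpha))
                 (omega_t lam n (p nu - k)%nat)) ->
  reduced_brjuno lam n.
Proof.
  intros _ _ Hs Hres (p & Hp & k & alpha & _ & Hcontrol).
  destruct (classic (exists m0, Rbar_lt (omega_t lam n m0) (Finite 1)))
    as [[m0 Hm0] | Hge1].
  - exists (shifted_seq p k m0).
    apply (brjuno_along_shifted_seq (omega_s lam n s) _ p k m0 alpha); auto.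
    exact (omega_t_antitone lam n).
  - exists (fun nu => 2 ^ nu)%nat.
    eapply (brjuno_along_pow2 _ 1 _ Rlt_0_1); intros m Hm; split.
    + apply Rbar_not_lt_le; intros Hlt; apply Hge1; now exists m.
    + exact (omega_t_bounded lam n s m Hs Hres Hm).
Qed.
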